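(* Let $G$ be a graph with connected components $G_1,\ldots,G_k$, where $G_1,\ldots,G_i$ ($i\geq 0$) are isolated vertices and $G_{i+1},\ldots,G_k$ each have at least two vertices. Then \[ \operatorname{cdim}(G)=\max\{i-1,0\}+\sum_{j=i+1}^{k}\operatorname{cdim}(G_j). \]
   Context: All graphs are finite, simple, undirected and nonempty. For distinct vertices $v,w$ of a graph $G$, $\kappa(v,w)=\kappa_G(v,w)$ is the maximum number of internally vertex-disjoint $v$–$w$ paths in $G$ (so $\kappa(v,w)=0$ if $v,w$ lie in different components; if $v,w$ are adjacent the edge $vw$ counts as one such path); by convention $\kappa(v,v)=\infty$. For an ordered vertex set $W=(w_1,\ldots,w_k)$, the connectivity representation of $v$ is $r_G(v,W)=[\kappa(v,w_1),\ldots,\kappa(v,w_k)]$. $W$ is resolving for $G$ if $r_G(v_1,W)=r_G(v_2,W)$ implies $v_1=v_2$ for all $v_1,v_2\in V(G)$ (the empty set is resolving for the one-vertex graph). A resolving set of minimum cardinality is a (connectivity) basis, and the connectivity dimension $\operatorname{cdim}(G)$ is the cardinality of a basis. *)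

From mathcomp Require Import all_boot.
From mathcomp Require Import boolp.

Set Implicit Arguments.
Unset Strict Implicit.
Unset Printing Implicit Defensive.

Section Graph.
Variables (T : finType) (e : rel T).

(* The graph induced on the vertex set V : {set T} (the edge relation e is
   assumed symmetric and irreflexive in the theorem). *)
Definition adjV (V : {set T}) : rel T :=
  fun x y => [&& x \in V, y \in V & e x y].

Definition vwpath (V : {set T}) (v w : T) (s : seq T) : bool :=
  if s is x :: rest then
    [&& x == v, x \in V, path (adjV V) x rest, last x rest == w & uniq s]
  else false.

Definition interior (v w : T) (s : seq T) : seq T :=
  [seq x <- s | (x != v) && (x != w)].

Definition int_disjoint (v w : T) (s1 s2 : seq T) : bool :=
  all (fun x => x \notin interior v w s2) (interior v w s1).

Definition has_k_paths (V : {set T}) (v w : T) (k : nat) : Prop :=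
  exists fam : seq (seq T),
    [/\ size fam = k, uniq fam, all (vwpath V v w) fam
      & pairwise (int_disjoint v w) fam].

(* kappa(v,w) in G[V]; None encodes infinity (the case v = w).  The maximum is
   taken over k <= #|T|, which bounds the number of such paths. *)
Definition kappa (V : {set T}) (v w : T) : option nat :=
  if v == w then None
  else Some (\max_(k < #|T|.+1 | `[< has_k_paths V v w k >]) (k : nat)).

(* Connectivity representation r(v, W) (W listed in the enumeration order). *)
Definition crep (V : {set T}) (v : T) (W : {set T}) : seq (option nat) :=
  [seq kappa V v w | w <- enum W].

Definition resolving (V : {set T}) (W : {set T}) : bool :=
  (W \subset V) &&
  [forall v1 in V, forall v2 in V, (crep V v1 W == crep V v2 W) ==> (v1 == v2)].

(* Connectivity dimension of G[V]: minimum size of a resolving set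
   (V itself is always resolving, so the default #|V| is harmless). *)
Definition cdim (V : {set T}) : nat :=
  \big[minn/#|V|]_(W : {set T} | resolving V W) #|W|.

Definition component (V : {set T}) (x : T) : {set T} :=
  [set y in V | connect (adjV V) x y].

Definition components (V : {set T}) : {set {set T}} :=
  [set component V x | x in V].

End Graph.

(* Between different components kappa is 0, inside a component it is the
   kappa of that component, and it is positive exactly between distinct
   connected vertices.  Hence a resolving set of G meets every nontrivial
   component G_j in a resolving set of G_j, and can miss at most one isolated
   vertex (two missed isolated vertices would both have representation
   [0,...,0]).  Conversely, the union of bases of the nontrivial components
   with all isolated vertices but one is resolving: a vertex outside it that
   lies in a nontrivial G_j has a positive entry at some basis vertex of G_j,
   which pins down G_j and then the vertex itself. *)
From HB Require Import structures.
From mathcomp Require Import all_boot.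
From mathcomp Require Import boolp.

Set Implicit Arguments.
Unset Strict Implicit.
Unset Printing Implicit Defensive.

(* [minn] has no unit on [nat]; its semigroup structure suffices for [bigD1]. *)
HB.instance Definition _ := SemiGroup.isComLaw.Build nat minn minnA minnC.

Lemma sum_indicator_card (T : finType) (A : {set T}) (P : pred T) :
  \sum_(x in A) (P x : nat) = #|[set x in A | P x]|.
Proof.
by rewrite -big_mkcondr -sum1_card; apply: eq_bigl => x; rewrite inE.
Qed.

Section Resolving.
Variables (T : finType) (e : rel T).
Implicit Types (C V W : {set T}) (v w : T).

Lemma kappa_eq_None V v w : (kappa e V v w == None) = (v == w).
Proof. by rewrite /kappa; case: (v =P w). Qed.

Lemma crepP V v1 v2 W :
  crep e V v1 W = crep e V v2 W <->
  {in W, forall w, kappa e V v1 w = kappa e V v2 w}.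
Proof.
rewrite /crep -eq_in_map.
by split=> eq_kappa w wW; apply: eq_kappa; rewrite ?mem_enum in wW *.
Qed.

Lemma resolvingP V W :
  resolving e V W <->
  W \subset V /\ {in V &, forall v1 v2,
    {in W, forall w, kappa e V v1 w = kappa e V v2 w} -> v1 = v2}.
Proof.
split=> [/andP[sWV /forallP resW] | [sWV resW]].
  split=> // v1 v2 v1V v2V /crepP/eqP eq_crep.
  move: (resW v1); rewrite v1V => /forall_inP/(_ v2 v2V)/implyP.
  by move=> /(_ eq_crep)/eqP.
rewrite /resolving sWV; apply/forall_inP=> v1 v1V; apply/forall_inP=> v2 v2V.
by apply/implyP=> /eqP/crepP/(resW v1 v2 v1V v2V)->.
Qed.

Lemma kappa_eq_self V v1 v2 w :
  kappa e V v1 w = kappa e V v2 w -> (v1 == w) = (v2 == w).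
Proof. by rewrite -!(kappa_eq_None V) => ->. Qed.

Lemma resolving_refl V : resolving e V V.
Proof.
apply/resolvingP; split=> // v1 v2 v1V _ /(_ v1 v1V)/kappa_eq_self.
by rewrite eqxx => /esym/eqP.
Qed.

Lemma resolving_set0 V : resolving e V set0 -> #|V| <= 1.
Proof.
case/resolvingP=> _ res0; apply/card_le1_eqP=> v1 v2 v1V v2V.
by apply: res0 => // w; rewrite inE.
Qed.

Lemma cdim_min V W : resolving e V W -> cdim e V <= #|W|.
Proof. by move=> resW; rewrite /cdim (bigD1 W) //= geq_minl. Qed.

Definition cbasis V : {set T} :=
  [arg min_(W < V | resolving e V W) #|W|].

Lemma cbasisP V : resolving e V (cbasis V) /\ #|cbasis V| = cdim e V.
Proof.
rewrite /cbasis; case: arg_minnP => [|B resB minB]; first exact: resolving_refl.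
split=> //; apply/eqP; rewrite eqn_leq cdim_min // andbT /cdim.
apply: (big_ind (fun n => #|B| <= n)) => [||W /minB //].
- exact/minB/resolving_refl.
- by move=> m n Bm Bn; rewrite leq_min Bm.
Qed.

Lemma vwpath_connect V v w s : vwpath e V v w s -> connect (adjV e V) v w.
Proof.
by case: s => // x s /and5P[/eqP <- _ pxs /eqP <- _]; apply/connectP; exists s.
Qed.

Lemma kappa_disconnected V v w :
  v != w -> ~~ connect (adjV e V) v w -> kappa e V v w = Some 0.
Proof.
move=> /negbTE neq_vw not_vw; rewrite /kappa neq_vw; congr Some; apply/eqP.
rewrite -leqn0; apply/bigmax_leqP => k /asboolP[[|s fam] [<- // _ /= paths _]].
by case/andP: paths => /vwpath_connect vw; rewrite vw in not_vw.
Qed.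

Lemma kappa_connected V v w :
  v \in V -> v != w -> connect (adjV e V) v w ->
  exists k, kappa e V v w = Some k.+1.
Proof.
move=> vV neq_vw /connectP[p pp lp]; rewrite /kappa (negbTE neq_vw).
move: lp; case: (shortenP pp) => p' pp' uniq_p' _ lp.
set m := \max_(_ < _ | _) _; suff: 0 < m by case: m => // k; exists k.
have one_lt : 1 < #|T|.+1 by rewrite ltnS; apply/card_gt0P; exists v.
apply: leq_trans (leq_bigmax_cond (Ordinal one_lt) _) => //; apply/asboolP.
exists [:: v :: p']; split=> //=.
by rewrite eqxx vV pp' -lp eqxx andbT.
Qed.

Lemma kappa_gt0_connect V v w k :
  kappa e V v w = Some k.+1 -> connect (adjV e V) v w.
Proof.
have [->|neq_vw] := eqVneq v w; first by rewrite connect0.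
by apply: contra_eqT => /(kappa_disconnected neq_vw) ->.
Qed.

Lemma kappa_closed C v w :
  (forall x y, x \in C -> e x y -> y \in C) -> v \in C ->
  kappa e C v w = kappa e [set: T] v w.
Proof.
move=> closedC vC; rewrite /kappa /has_k_paths.
suff -> : vwpath e C v w = vwpath e [set: T] v w by [].
apply: funext => -[//|x s] /=; case: eqP => //= ->; rewrite vC in_setT.
congr [&& _, _ & _]; elim: s v vC {x} => //= y s IHs x xC.
rewrite /adjV xC !in_setT /=; case exy: (e x y); last by rewrite !andbF.
by rewrite (closedC _ _ xC exy) IHs // (closedC _ _ xC exy).
Qed.

End Resolving.

Section Components.
Variables (T : finType) (e : rel T).
Hypothesis e_sym : symmetric e.
Implicit Types (C W : {set T}) (u v w x y : T).

Local Notation comp := (component e [set: T]).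
Local Notation comps := (components e [set: T]).
Local Notation isolated := [set C in comps | #|C| == 1].

Lemma connect_adjT : connect (adjV e [set: T]) =2 connect e.
Proof. by apply: eq_connect => x y; rewrite /adjV !in_setT. Qed.

Lemma mem_component x y : (y \in comp x) = connect e x y.
Proof. by rewrite inE in_setT connect_adjT. Qed.

Lemma component_refl x : x \in comp x.
Proof. by rewrite mem_component connect0. Qed.

Lemma component_in_components x : comp x \in comps.
Proof. exact: imset_f. Qed.

Let connect_e_sym : connect_sym e.
Proof. exact: sym_connect_sym. Qed.

Lemma component_eq x y : y \in comp x -> comp y = comp x.
Proof.
rewrite mem_component => cxy; apply/setP => z.
by rewrite !mem_component (same_connect connect_e_sym cxy).
Qed.

Lemma componentsE C v : C \in comps -> v \in C -> C = comp v.
Proof. by case/imsetP => x _ -> /component_eq ->. Qed.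

Lemma components_partition : partition comps [set: T].
Proof.
apply: equivalence_partitionP => x y z _ _ _; split; first exact: connect0.
by move=> cxy; rewrite (same_connect _ cxy) // => a b; rewrite !connect_adjT.
Qed.

Lemma components_closed C x y : C \in comps -> x \in C -> e x y -> y \in C.
Proof.
move=> /componentsE CE /[dup] /CE -> _ exy; rewrite !mem_component.
exact/connect1.
Qed.

Lemma components_gt1 C : C \in comps -> (1 < #|C|) = (#|C| != 1).
Proof.
case/imsetP => x _ ->.
have : 0 < #|comp x| by apply/card_gt0P; exists x; apply: component_refl.
by case: #|_| => [|[]].
Qed.

Lemma kappa_component C v w : C \in comps -> v \in C ->
  kappa e C v w = kappa e [set: T] v w.
Proof.
by move=> Ccomp; apply/kappa_closed => x y; apply: components_closed.
Qed.

Lemma kappa_other_component C v w : C \in comps -> v \in C -> w \notin C ->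
  kappa e [set: T] v w = Some 0.
Proof.
move=> Ccomp vC wNC; apply: kappa_disconnected.
  by apply: contraNneq wNC => <-.
by rewrite connect_adjT -mem_component -(componentsE Ccomp vC).
Qed.

Lemma resolving_component W C : resolving e [set: T] W -> C \in comps ->
  resolving e C (C :&: W).
Proof.
move=> /resolvingP[_ resW] Ccomp; apply/resolvingP.
split=> [|v1 v2 v1C v2C eq_kappa]; first exact: subsetIl.
apply: resW; rewrite ?in_setT // => w wW.
have [wC | wNC] := boolP (w \in C).
  by rewrite -!(kappa_component w Ccomp) // eq_kappa // inE wC.
by rewrite !(kappa_other_component Ccomp).
Qed.

Lemma card_components_split W : #|W| = \sum_(C in comps) #|C :&: W|.
Proof.
have card_indicator (A : {set T}) : \sum_(x in A) (x \in W : nat) = #|A :&: W|.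
  by rewrite sum_indicator_card; apply: eq_card => x; rewrite !inE.
have /and3P[/eqP cover_comps trivI _] := components_partition.
transitivity (\sum_(x in cover comps) (x \in W : nat)).
  by rewrite cover_comps card_indicator setTI.
by rewrite big_trivIset //; apply: eq_bigr => C _; apply: card_indicator.
Qed.

Lemma sum_components_split F :
  \sum_(C in comps) F C =
  \sum_(C in isolated) F C + \sum_(C in comps | 1 < #|C|) F C.
Proof.
rewrite (bigID (fun C => #|C| == 1)) /=; congr (_ + _).
  by apply: eq_bigl => C; rewrite inE.
by apply: eq_bigl => C; case: (boolP (C \in comps)) => //= /components_gt1->.
Qed.

Lemma isolated_missed_le1 W : resolving e [set: T] W ->
  #|[set C in isolated | C :&: W == set0]| <= 1.
Proof.
case/resolvingP=> _ resW; apply/card_le1_eqP => C1 C2.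
have isolated_point C : C \in [set C in isolated | C :&: W == set0] ->
    exists2 u, C = [set u] & {in W, forall w, kappa e [set: T] u w = Some 0}.
  rewrite !inE => /andP[/andP[Ccomp /cards1P[u CE]] /eqP noW].
  have uNW : u \notin W by move/setP/(_ u): noW; rewrite CE !inE eqxx /= => ->.
  exists u => // w wW; apply: (kappa_other_component Ccomp).
    by rewrite CE set11.
  by rewrite CE inE; apply: contraNneq uNW => <-.
move=> /isolated_point[u1 -> kappa_u1] /isolated_point[u2 -> kappa_u2].
congr [set _]; apply: resW; rewrite ?in_setT // => w wW.
by rewrite kappa_u1 ?kappa_u2.
Qed.

Lemma resolving_card_ge W : resolving e [set: T] W ->
  (#|isolated| - 1) + \sum_(C in comps | 1 < #|C|) cdim e C <= #|W|.
Proof.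
move=> resW; rewrite card_components_split sum_components_split.
apply: leq_add; last first.
  apply: leq_sum => C /andP[Ccomp _].
  exact: cdim_min (resolving_component resW Ccomp).
(* Every isolated component not missed by W contributes a vertex of W. *)
rewrite leq_subLR.
apply: leq_trans (leq_add (isolated_missed_le1 resW) (leqnn _)).
rewrite -(sum_indicator_card _ (fun C => C :&: W == set0)) -big_split /=.
rewrite -sum1_card leq_sum // => C _.
by case: eqP => [_|/eqP]; rewrite ?add1n // add0n card_gt0.
Qed.

(* This is [set0], which is not a component, when G has no isolated vertex. *)
Definition omitted_isolated : {set T} := odflt set0 [pick C in isolated].

Definition basis_part C : {set T} :=
  if 1 < #|C| then cbasis e C else if C == omitted_isolated then set0 else C.

Definition glued_basis : {set T} := \bigcup_(C in comps) basis_part C.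

Lemma card_isolated_omitted : #|isolated :\ omitted_isolated| = #|isolated| - 1.
Proof.
rewrite /omitted_isolated; case: pickP => [C isoC | no_iso].
  by rewrite (cardsD1 C isolated) isoC add1n subn1.
suff -> : isolated = set0 by rewrite set0D cards0.
by apply/setP => C; rewrite no_iso inE.
Qed.

Lemma basis_part_sub C : basis_part C \subset C.
Proof.
rewrite /basis_part; case: ifP => _.
  by case: (cbasisP e C) => /resolvingP[].
by case: ifP => _; rewrite ?sub0set.
Qed.

Lemma basis_part_gt1 C : 1 < #|C| -> basis_part C = cbasis e C.
Proof. by rewrite /basis_part => ->. Qed.

Lemma glued_basis_component C : C \in comps -> C :&: glued_basis = basis_part C.
Proof.
move=> Ccomp; apply/setP => x; rewrite inE.
apply/andP/idP => [[xC /bigcupP[D Dcomp xD]] | xB].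
  have xD' := subsetP (basis_part_sub D) x xD.
  by rewrite (componentsE Ccomp xC) -(componentsE Dcomp xD').
split; first exact: subsetP (basis_part_sub C) x xB.
by apply/bigcupP; exists C.
Qed.

Lemma card_glued_basis :
  #|glued_basis| = (#|isolated| - 1) + \sum_(C in comps | 1 < #|C|) cdim e C.
Proof.
rewrite card_components_split sum_components_split -card_isolated_omitted.
congr (_ + _); last first.
  apply: eq_bigr => C /andP[Ccomp gt1].
  by rewrite glued_basis_component // basis_part_gt1 //; case: (cbasisP e C).
rewrite (eq_bigr (fun C => (C != omitted_isolated : nat))).
  by rewrite sum_indicator_card; apply: eq_card => C; rewrite !inE andbC.
move=> C; rewrite inE => /andP[Ccomp /eqP C1].
rewrite glued_basis_component // /basis_part C1.
by case: eqP => _; rewrite ?cards0.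
Qed.

Lemma resolved_in_component W B v1 v2 :
  resolving e (comp v1) B -> B \subset W -> 1 < #|comp v1| ->
  {in W, forall w, kappa e [set: T] v1 w = kappa e [set: T] v2 w} -> v1 = v2.
Proof.
move=> resB sBW gt1 eq_kappa; have /resolvingP[sBC resBC] := resB.
have [b bB] : exists b, b \in B.
  apply/set0Pn; apply: contraTneq gt1 => B0.
  by rewrite -leqNgt; move: resB; rewrite B0 => /resolving_set0.
have eq_kappa_b := eq_kappa b (subsetP sBW b bB).
have [v1b | neq_v1b] := eqVneq v1 b.
  by move: (kappa_eq_self eq_kappa_b); rewrite v1b eqxx => /esym/eqP.
have [k kappa_v1b] : exists k, kappa e [set: T] v1 b = Some k.+1.
  apply: kappa_connected; rewrite ?in_setT // connect_adjT -mem_component.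
  exact: subsetP sBC b bB.
have v2C : v2 \in comp v1.
  rewrite -(component_eq (subsetP sBC b bB)) mem_component connect_e_sym.
  by rewrite -connect_adjT (kappa_gt0_connect (k := k)) // -eq_kappa_b.
apply: resBC => // [|w wB]; first exact: component_refl.
rewrite !(kappa_component w (component_in_components v1)) ?component_refl //.
exact: eq_kappa (subsetP sBW w wB).
Qed.

Lemma cbasis_sub_glued C :
  C \in comps -> 1 < #|C| -> cbasis e C \subset glued_basis.
Proof.
move=> Ccomp gt1; rewrite -(basis_part_gt1 gt1) -glued_basis_component //.
exact: subsetIr.
Qed.

Lemma isolated_outside_glued v : v \notin glued_basis -> #|comp v| <= 1 ->
  comp v = omitted_isolated.
Proof.
move=> vNW le1; apply/eqP; apply: contraNT vNW => neq.
have : v \in comp v :&: glued_basis.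
  rewrite glued_basis_component ?component_in_components //.
  by rewrite /basis_part ltnNge le1 (negbTE neq) component_refl.
by rewrite inE => /andP[].
Qed.

Lemma glued_basis_resolving : resolving e [set: T] glued_basis.
Proof.
apply/resolvingP; split=> [|v1 v2 _ _ eq_kappa]; first exact: subsetT.
have [v1W | v1NW] := boolP (v1 \in glued_basis).
  by move: (kappa_eq_self (eq_kappa v1 v1W)); rewrite eqxx => /esym/eqP.
have [v2W | v2NW] := boolP (v2 \in glued_basis).
  by move: (kappa_eq_self (eq_kappa v2 v2W)); rewrite eqxx => /eqP.
have cbasis_comp v := (cbasisP e (comp v)).1.
have glued_sub v := cbasis_sub_glued (component_in_components v).
have [gt1 | le1_v1] := ltnP 1 #|comp v1|.
  exact: resolved_in_component (cbasis_comp v1) (glued_sub v1 gt1) gt1 _.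
have [gt1 | le1_v2] := ltnP 1 #|comp v2|.
  apply/esym/(resolved_in_component (cbasis_comp v2) (glued_sub v2 gt1) gt1).
  by move=> w /eq_kappa.
have v2C : v2 \in comp v1.
  rewrite isolated_outside_glued // -(isolated_outside_glued v2NW) //.
  exact: component_refl.
by apply: (card_le1_eqP le1_v1) => //; apply: component_refl.
Qed.

End Components.

Theorem mainTheorem1 (T : finType) (e : rel T)
    (e_sym : symmetric e) (e_irr : irreflexive e) (T_nonempty : 0 < #|T|) :
  cdim e [set: T] =
    (#|[set C in components e [set: T] | #|C| == 1]| - 1)
    + \sum_(C in components e [set: T] | 1 < #|C|) cdim e C.
Proof.
apply/eqP; rewrite eqn_leq; apply/andP; split.
  by rewrite -(card_glued_basis e_sym) cdim_min // glued_basis_resolving.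
by have [resB <-] := cbasisP e [set: T]; apply: resolving_card_ge.
Qed.
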